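(* Let $\mathcal{K}$ be a convex cone in a finite-dimensional Euclidean space and ${\mathcal F}_t\unlhd\mathcal{K}$ a face. In the procedure ${\mathcal F}_0=\mathcal{K}$, ${\mathcal F}_{i+1}={\mathcal F}_i\cap d_i^{\perp}$ with $d_i\in{\mathcal F}_i^*$, $d_i\notin{\mathcal F}_i^{\perp}$, $d_i\perp{\mathcal F}_t$ (continued until no such $d_i$ exists), choosing at every step $d_i\in\operatorname{ri}\big({\mathcal F}_i^*\cap {\mathcal F}_t^{\perp}\big)$ yields the minimum possible number of steps, i.e., the number of steps equals the singularity degree of ${\mathcal F}_t$ over $\mathcal{K}$.
   Context: The singularity degree of a face ${\mathcal F}_t\unlhd\mathcal{K}$ over $\mathcal{K}$ is the minimum number $d$ of steps of a sequence ${\mathcal F}_0=\mathcal{K}$, ${\mathcal F}_{i+1}={\mathcal F}_i\cap d_i^{\perp}$, with $d_i\in{\mathcal F}_i^*$, $d_i\notin{\mathcal F}_i^\perp$, $d_i\perp{\mathcal F}_t$, such that ${\mathcal F}_d={\mathcal F}_t$. Here $S^*$ is the dual cone, $S^\perp$ the orthogonal complement, $\operatorname{ri}$ the relative interior. *)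

From HB Require Import structures.
From mathcomp Require Import all_boot all_order all_algebra.
From mathcomp Require Import reals.
Set Implicit Arguments. Unset Strict Implicit. Unset Printing Implicit Defensive.
Import Order.TTheory GRing.Theory Num.Theory.
Local Open Scope ring_scope.

Section Defs.
Variables (R : realType) (n : nat).
Notation vec := 'rV[R]_n.

Definition vset := vec -> Prop.

Definition dot (u v : vec) : R := \sum_(i < n) u 0 i * v 0 i.

Definition convex_cone (K : vset) : Prop :=
  K 0 /\ (forall x y, K x -> K y -> K (x + y)) /\
  (forall (a : R) x, 0 <= a -> K x -> K (a *: x)).

Definition face (F K : vset) : Prop :=
  convex_cone F /\ (forall x, F x -> K x) /\
  (forall x y, K x -> K y -> F (x + y) -> F x /\ F y).

Definition dual (S : vset) : vset := fun y => forall x, S x -> 0 <= dot x y.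

Definition orth (S : vset) : vset := fun y => forall x, S x -> dot x y = 0.

Definition setI_ (A B : vset) : vset := fun x => A x /\ B x.

Definition aff (C : vset) : vset := fun x =>
  exists (k : nat) (lam : 'I_k -> R) (p : 'I_k -> vec),
    (forall i, C (p i)) /\ \sum_(i < k) lam i = 1 /\ x = \sum_(i < k) lam i *: p i.

(* relative interior: interior of C relative to its affine hull
   (Euclidean open ball of squared radius e) *)
Definition ri (C : vset) : vset := fun x =>
  C x /\ exists e : R, 0 < e /\
    (forall y, aff C y -> dot (y - x) (y - x) < e -> C y).

Definition fr_dir (Fi Ft : vset) (d : vec) : Prop :=
  dual Fi d /\ ~ orth Fi d /\ orth Ft d.

Definition fr_step (Fi Fnext : vset) (d : vec) : Prop :=
  forall x, Fnext x <-> (Fi x /\ dot d x = 0).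

Definition fr_reaches (K Ft : vset) (m : nat) : Prop :=
  exists (F : nat -> vset) (d : nat -> vec),
    (forall x, F 0%N x <-> K x) /\
    (forall i, (i < m)%N -> fr_dir (F i) Ft (d i) /\ fr_step (F i) (F i.+1) (d i)) /\
    (forall x, F m x <-> Ft x).

Definition singularity_degree (K Ft : vset) (s : nat) : Prop :=
  fr_reaches K Ft s /\ (forall m, fr_reaches K Ft m -> (s <= m)%N).

End Defs.

From HB Require Import structures.
From mathcomp Require Import all_boot all_order all_algebra.
From mathcomp Require Import boolp classical_sets reals.
From mathcomp Require Import ring lra.
Import Order.TTheory GRing.Theory Num.Theory.
Local Open Scope ring_scope.
Set Implicit Arguments. Unset Strict Implicit.

(* - Separation: a convex cone C that is not a linear subspace has a dual
     vector not vanishing on C. The cone need not be closed, so instead of a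
     projection argument we extend functionals one coordinate at a time,
     choosing each coefficient as a supremum of ratios.
   - Termination: applied to the cone F_N - Ft, separation shows that when
     no admissible direction is left, F_N = Ft (here Ft being a face of K
     is used).
   - Minimality: a direction in the relative interior of F_i^* ∩ Ft^⊥
     makes every admissible direction vanish on F_(i+1); by induction the
     greedy cone F_j lies inside the j-th cone of any other sequence, so a
     sequence of m < N steps would force d_m to vanish on F_m. *)

Section InnerProduct.
Variables (R : realType) (n : nat).
Notation vec := 'rV[R]_n.

Lemma dotC (x y : vec) : dot x y = dot y x.
Proof. by apply: eq_bigr => i _; rewrite mulrC. Qed.

Lemma dotDl (x y z : vec) : dot (x + y) z = dot x z + dot y z.
Proof. by rewrite /dot -big_split; apply: eq_bigr => i _; rewrite mxE mulrDl. Qed.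

Lemma dotZl (a : R) (x z : vec) : dot (a *: x) z = a * dot x z.
Proof. by rewrite /dot mulr_sumr; apply: eq_bigr => i _; rewrite mxE mulrA. Qed.

Lemma dotNl (x z : vec) : dot (- x) z = - dot x z.
Proof. by rewrite -scaleN1r dotZl mulN1r. Qed.

Lemma dotBl (x y z : vec) : dot (x - y) z = dot x z - dot y z.
Proof. by rewrite dotDl dotNl. Qed.

Lemma dot0l (z : vec) : dot 0 z = 0.
Proof. by rewrite -(scale0r 0) dotZl mul0r. Qed.

Lemma dotDr (x y z : vec) : dot z (x + y) = dot z x + dot z y.
Proof. by rewrite dotC dotDl !(dotC z). Qed.

Lemma dotZr (a : R) (x z : vec) : dot z (a *: x) = a * dot z x.
Proof. by rewrite dotC dotZl dotC. Qed.

Lemma dotBr (x y z : vec) : dot z (x - y) = dot z x - dot z y.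
Proof. by rewrite !(dotC z) dotBl. Qed.

Lemma dot0r (z : vec) : dot z 0 = 0.
Proof. by rewrite dotC dot0l. Qed.

Lemma dot_ge0 (x : vec) : 0 <= dot x x.
Proof. by apply: sumr_ge0 => i _; rewrite -expr2 sqr_ge0. Qed.

Lemma dot_delta (y : vec) (i : 'I_n) : dot y (delta_mx 0 i) = y 0 i.
Proof.
rewrite /dot (bigD1 i) //= big1 => [|j /negbTE ji]; rewrite !mxE ?eqxx ?ji /=.
  by rewrite mulr1 addr0.
by rewrite mulr0.
Qed.

End InnerProduct.

Section Separation.
Variables (R : realType) (n : nat).
Notation vec := 'rV[R]_n.
Implicit Types (C : vset R n) (fs : seq vec).

Definition kernel_of fs : vset R n :=
  fun x => forall f, f \in fs -> dot x f = 0.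

Definition symmetric_on C fs : Prop :=
  forall x, C x -> exists y, C y /\ forall f, f \in fs -> dot y f = - dot x f.

Lemma cone_kernel C fs : convex_cone C -> convex_cone (setI_ C (kernel_of fs)).
Proof.
move=> [C0 [CD CZ]]; split; last split.
- by split => // f _; rewrite dot0l.
- move=> x y [Cx Hx] [Cy Hy]; split; first exact: CD.
  by move=> f ff; rewrite dotDl Hx // Hy // addr0.
- move=> a x a0 [Cx Hx]; split; first exact: CZ.
  by move=> f ff; rewrite dotZl Hx // mulr0.
Qed.

(* If t is nonnegative on C ∩ s^⊥, the ratios t/s on the negative side of s
   are below those on the positive side: z = <y,s> x - <x,s> y lies in
   C ∩ s^⊥, so 0 <= <z,t>. *)
Lemma ratio_sep C s t : convex_cone C ->
  (forall x, C x -> dot x s = 0 -> 0 <= dot x t) ->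
  forall x y, C x -> C y -> dot x s < 0 -> 0 < dot y s ->
  dot x t / dot x s <= dot y t / dot y s.
Proof.
move=> [_ [CD CZ]] t_ge0 x y Cx Cy sx sy.
have nx : 0 <= - dot x s by rewrite oppr_ge0 ltW.
have Cz := CD _ _ (CZ (dot y s) x (ltW sy) Cx) (CZ (- dot x s) y nx Cy).
have := t_ge0 _ Cz.
rewrite !dotDl !dotZl mulNr (mulrC (dot y s)) addrN => /(_ erefl) zt_ge0.
rewrite ler_pdivlMr // mulrAC ler_ndivrMr //.
nra.
Qed.

(* The multiple is a supremum of ratios. *)
Lemma dual_correction C s t : convex_cone C ->
  (forall x, C x -> dot x s = 0 -> 0 <= dot x t) ->
  symmetric_on C [:: s] ->
  exists a : R, dual C (t - a *: s).
Proof.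
move=> hC t_ge0 symC.
suff [a Ha] : exists a : R, forall x, C x -> a * dot x s <= dot x t.
  by exists a => x Cx; rewrite dotBr dotZr subr_ge0; apply: Ha.
have sym x : C x -> exists y, C y /\ dot y s = - dot x s.
  by move=> /symC [y [Cy Hy]]; exists y; split; last exact/Hy/mem_head.
case: (pselect (exists x, C x /\ dot x s < 0)) => [[x0 [Cx0 sx0]]|nox].
  have [y0 [Cy0 sy0]] := sym _ Cx0.
  pose E : set R := fun r => exists x, C x /\ dot x s < 0 /\ r = dot x t / dot x s.
  have ubE y : C y -> 0 < dot y s -> ubound E (dot y t / dot y s).
    by move=> Cy sy r [x [Cx [sx ->]]]; exact: (ratio_sep hC t_ge0).
  exists (sup E) => x Cx.
  case: (ltgtP (dot x s) 0) => sx.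
  - have : dot x t / dot x s <= sup E.
      apply: ub_le_sup; last by exists x.
      by exists (dot y0 t / dot y0 s); apply: ubE; rewrite // sy0 oppr_gt0.
    by rewrite ler_ndivrMr.
  - have : sup E <= dot x t / dot x s.
      by apply: ge_sup; [exists (dot x0 t / dot x0 s); exists x0 | apply: ubE].
    by rewrite ler_pdivlMr.
  - by rewrite sx mulr0; apply: t_ge0.
exists 0 => x Cx; rewrite mul0r.
case: (ltgtP (dot x s) 0) => sx; last exact: t_ge0.
- by exfalso; apply: nox; exists x.
- have [y [Cy sy]] := sym _ Cx.
  by exfalso; apply: nox; exists y; rewrite sy oppr_lt0.
Qed.

Lemma dual_correction_seq fs : forall C tau, convex_cone C ->
  (forall x, C x -> kernel_of fs x -> 0 <= dot x tau) ->
  symmetric_on C fs ->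
  exists w, orth (kernel_of fs) w /\ dual C (tau - w).
Proof.
elim: fs => [|g fs IH] C tau hC tau_ge0 symC.
  exists 0; split=> x; rewrite ?dot0r // subr0 => Cx; exact: tau_ge0.
have [a Ha] : exists a : R, dual (setI_ C (kernel_of fs)) (tau - a *: g).
  apply: dual_correction; first exact: cone_kernel.
  - move=> x [Cx Hx] xg; apply: tau_ge0 => // f.
    by rewrite inE => /orP[/eqP->//|]; exact: Hx.
  - move=> x [Cx Hx]; have [y [Cy Hy]] := symC _ Cx; exists y.
    split; last by move=> f; rewrite mem_seq1 => /eqP->; rewrite Hy ?mem_head.
    by split=> // f ff; rewrite Hy ?Hx ?oppr0 // inE ff orbT.
have [w [Hw0 Hwle]] : exists w, orth (kernel_of fs) w /\ dual C (tau - a *: g - w).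
  apply: IH => // [x Cx Hx|x Cx]; first exact: Ha.
  have [y [Cy Hy]] := symC _ Cx; exists y; split=> // f ff.
  by apply: Hy; rewrite inE ff orbT.
exists (w + a *: g); split; last by rewrite opprD addrA addrAC.
move=> x Hx; rewrite dotDr dotZr Hw0 => [|f ff]; last by apply: Hx; rewrite inE ff orbT.
by rewrite Hx ?mulr0 ?addr0 // inE eqxx.
Qed.

(* If y0 ∈ C negates x0 on fs but no point of C negates x0 on g :: fs, then
   on C ∩ ker fs the functional g has the sign of r = <x0 + y0, g>:
   otherwise y0 + c z would negate x0 on g :: fs for a suitable c >= 0. *)
Lemma asymmetric_sign C fs g x0 y0 : convex_cone C -> C y0 ->
  (forall f, f \in fs -> dot y0 f = - dot x0 f) ->
  ~ (exists y, C y /\ forall f, f \in g :: fs -> dot y f = - dot x0 f) ->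
  forall z, C z -> kernel_of fs z -> 0 <= dot (x0 + y0) g * dot z g.
Proof.
move=> [_ [CD CZ]] Cy0 Hy0 nneg z Cz Kz.
set r := dot (x0 + y0) g; case: (lerP 0 (r * dot z g)) => // neg; exfalso.
pose c := r ^+ 2 / (- (r * dot z g)).
have c0 : 0 <= c by rewrite divr_ge0 ?sqr_ge0 // oppr_ge0 ltW.
have cz : c * dot z g = - r.
  have [r0 zg0] : r != 0 /\ dot z g != 0.
    by split; apply/eqP => e; move: neg; rewrite e ?mul0r ?mulr0 ltxx.
  by rewrite /c; field; rewrite r0 zg0.
apply: nneg; exists (y0 + c *: z); split; first by apply: CD => //; apply: CZ.
move=> f; rewrite inE => /orP[/eqP->|ff].
  by rewrite dotDl dotZl cz /r dotDl; lra.
by rewrite dotDl dotZl Kz // mulr0 addr0 Hy0.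
Qed.

Lemma nontrivial_dual_of_asymmetric fs : forall C, convex_cone C ->
  ~ symmetric_on C fs -> exists d, dual C d /\ ~ orth C d.
Proof.
elim: fs => [|g fs IH] C hC asym.
  by exfalso; apply: asym => x Cx; exists x.
case: (pselect (symmetric_on C fs)) => [sym|]; last exact: IH.
have [x0 [Cx0 nneg]] : exists x0, C x0 /\
    ~ exists y, C y /\ forall f, f \in g :: fs -> dot y f = - dot x0 f.
  apply: contrapT => H; apply: asym => x Cx; apply: contrapT => ny.
  by apply: H; exists x.
have [y0 [Cy0 Hy0]] := sym _ Cx0.
set r := dot (x0 + y0) g.
have z0ker : kernel_of fs (x0 + y0) by move=> f ff; rewrite dotDl Hy0 // addrN.
have r0 : r != 0.
  apply/eqP => r0; apply: nneg; exists y0; split=> // f.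
  rewrite inE => /orP[/eqP->|]; last exact: Hy0.
  by apply/eqP; rewrite -addr_eq0 addrC -dotDl -/r r0.
have rg_ge0 z : C z -> kernel_of fs z -> 0 <= dot z (r *: g).
  by move=> Cz Kz; rewrite dotZr; exact: (asymmetric_sign hC Cy0 Hy0 nneg).
have [w [Hw0 Hw]] := dual_correction_seq hC rg_ge0 sym.
exists (r *: g - w); split => // orth_d.
have [_ [CD _]] := hC.
have := orth_d _ (CD _ _ Cx0 Cy0); rewrite dotBr Hw0 // dotZr subr0 => /eqP.
by rewrite mulf_eq0 (negbTE r0).
Qed.

(* A convex cone C that is not a linear subspace (some x ∈ C with -x ∉ C)
   has a dual vector not vanishing on C: apply the previous lemma to the
   coordinate functionals, for which symmetry means closure under negation. *)
Lemma dual_direction_of_nonsubspace C x : convex_cone C -> C x -> ~ C (- x) ->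
  exists d, dual C d /\ ~ orth C d.
Proof.
move=> hC Cx nCx.
apply: (@nontrivial_dual_of_asymmetric [seq delta_mx 0 i | i <- enum 'I_n]) => // sym.
have [y [Cy Hy]] := sym _ Cx; apply: nCx; suff -> : - x = y by [].
apply/rowP => i; rewrite mxE -!dot_delta; apply/esym/Hy/map_f.
by rewrite mem_enum.
Qed.
End Separation.

Section FacialReduction.
Variables (R : realType) (n : nat).
Notation vec := 'rV[R]_n.
Implicit Types (K C D S Fi Fn Ft : vset R n) (d e : vec).

Lemma fr_step_cone Fi Fn d : convex_cone Fi -> fr_step Fi Fn d -> convex_cone Fn.
Proof.
move=> [C0 [CD CZ]] st; split; last split.
- by apply/st; split; rewrite ?dot0r.
- move=> x y /st [Fx dx] /st [Fy dy]; apply/st; split; first exact: CD.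
  by rewrite dotDr dx dy addr0.
- move=> a x a0 /st [Fx dx]; apply/st; split; first exact: CZ.
  by rewrite dotZr dx mulr0.
Qed.

Lemma fr_step_keeps Fi Fn Ft d : fr_step Fi Fn d -> orth Ft d ->
  (forall x, Ft x -> Fi x) -> forall x, Ft x -> Fn x.
Proof.
move=> st od FtFi x Ftx; apply/st; split; first exact: FtFi.
by rewrite dotC; apply: od.
Qed.

Definition diff_set C D : vset R n :=
  fun c => exists z w, C z /\ D w /\ c = z - w.

Lemma diff_cone C D : convex_cone C -> convex_cone D -> convex_cone (diff_set C D).
Proof.
move=> [C0 [CD CZ]] [D0 [DD DZ]]; split; first by exists 0, 0; rewrite subr0.
split.
  move=> _ _ [z1 [w1 [Cz1 [Dw1 ->]]]] [z2 [w2 [Cz2 [Dw2 ->]]]].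
  exists (z1 + z2), (w1 + w2); do ![split; first by auto].
  by rewrite opprD addrACA.
move=> a _ a0 [z [w [Cz [Dw ->]]]]; exists (a *: z), (a *: w).
by do ![split; first by auto]; rewrite scalerBr.
Qed.

(* Otherwise a
   point x ∈ C \ Ft has -x ∉ C - Ft because Ft is a face, and a dual vector
   of C - Ft not vanishing on it is an admissible direction. *)
Lemma no_direction_reached K Ft C : face Ft K -> convex_cone C ->
  (forall x, C x -> K x) -> (forall x, Ft x -> C x) ->
  ~ (exists d, fr_dir C Ft d) -> forall x, C x -> Ft x.
Proof.
move=> [hFt [_ Fface]] hC CK FtC stuck x Cx; apply: contrapT => nFx.
have [[C0 _] [Ft0 _]] := (hC, hFt).
have nCx : ~ diff_set C Ft (- x).
  move=> [z [w [Cz [Ftw e]]]]; apply: nFx.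
  have Ftxz : Ft (x + z) by rewrite -[x]opprK e opprB subrK.
  by have [] := Fface _ _ (CK _ Cx) (CK _ Cz) Ftxz.
have Dx : diff_set C Ft x by exists x, 0; rewrite subr0.
have [dd [dd_dual dd_nonorth]] :=
  dual_direction_of_nonsubspace (diff_cone hC hFt) Dx nCx.
have dd_ge0 z : C z -> 0 <= dot z dd.
  by move=> Cz; apply: dd_dual; exists z, 0; rewrite subr0.
have dd_orth : orth Ft dd.
  move=> w Ftw; apply/eqP; rewrite eq_le dd_ge0 ?andbT; last exact: FtC.
  rewrite -oppr_ge0 -dotNl; apply: dd_dual; exists 0, w.
  by rewrite sub0r.
apply: stuck; exists dd; split; first exact: dd_ge0.
split=> // orthC; apply: dd_nonorth => _ [z [w [Cz [Ftw ->]]]].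
by rewrite dotBl orthC // dd_orth // subrr.
Qed.

(* From a relative interior point d of S one can move slightly beyond d,
   away from any e ∈ S, and stay in S: the point (1 + eps) d - eps e lies
   in the affine hull of S at distance eps |d - e| from d. *)
Lemma ri_extend S d e : ri S d -> S e ->
  exists eps : R, 0 < eps /\ S ((1 + eps) *: d - eps *: e).
Proof.
move=> [Sd [E [E0 HE]]] Se.
set q := dot (d - e) (d - e); have q0 : 0 <= q := dot_ge0 _.
set eps := E / (E + q).
have Eq0 : 0 < E + q by lra.
have eps0 : 0 < eps by rewrite divr_gt0.
have epsE : eps * (E + q) = E by rewrite /eps divfK // gt_eqF.
exists eps; split => //; apply: HE.
  exists 2%N, (fun j : 'I_2 => if j == ord0 then 1 + eps else - eps),
    (fun j : 'I_2 => if j == ord0 then d else e).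
  split; first by move=> j; case: (j == ord0).
  by rewrite !big_ord_recl !big_ord0 /= !addr0 addrK scaleNr.
have -> : (1 + eps) *: d - eps *: e - d = eps *: (d - e).
  by rewrite scalerDl scale1r scalerBr addrAC (addrC d) addrK.
rewrite dotZl dotZr -/q; nra.
Qed.

(* The relative interior choice: if d ∈ ri (C^* ∩ Ft^⊥), then every
   e ∈ C^* ∩ Ft^⊥ vanishes on the reduced cone C ∩ d^⊥, so C ∩ d^⊥ is the
   smallest cone that one step from C toward Ft can produce. *)
Lemma ri_direction_minimal C Ft d e : ri (setI_ (dual C) (orth Ft)) d ->
  dual C e -> orth Ft e -> forall x, C x -> dot d x = 0 -> dot x e = 0.
Proof.
move=> rid De Oe x Cx dx.
have [eps [eps0 [Dy _]]] := ri_extend rid (conj De Oe).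
have := Dy x Cx; rewrite dotBr !dotZr (dotC x d) dx mulr0 sub0r oppr_ge0.
have := De x Cx; nra.
Qed.
End FacialReduction.

Section GreedySequence.
Variables (R : realType) (n : nat) (K Ft : vset R n).
Hypotheses (hK : convex_cone K) (hF : face Ft K).
Variables (N : nat) (F : nat -> vset R n) (d : nat -> 'rV[R]_n).
Hypothesis F0 : forall x, F 0%N x <-> K x.
Hypothesis greedy_step : forall i, (i < N)%N ->
  fr_dir (F i) Ft (d i) /\
  ri (setI_ (dual (F i)) (orth Ft)) (d i) /\
  fr_step (F i) (F i.+1) (d i).
Hypothesis stuck : ~ exists d', fr_dir (F N) Ft d'.

Lemma greedy_chain i : (i <= N)%N ->
  [/\ convex_cone (F i), forall x, F i x -> K x & forall x, Ft x -> F i x].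
Proof.
have [_ [FtK _]] := hF.
have FK : F 0%N = K by apply/funext => x; apply/propext/F0.
elim: i => [|i IH] iN; first by rewrite FK.
have [[_ [_ od]] [_ st]] := greedy_step iN.
have [hC CK FtC] := IH (ltnW iN).
split; [exact: fr_step_cone st | by move=> x /st [/CK] | exact: fr_step_keeps st od FtC].
Qed.

Lemma greedy_reaches x : F N x <-> Ft x.
Proof.
have [hC CK FtC] := greedy_chain (leqnn N).
by split; [exact: (no_direction_reached hF hC CK FtC stuck) | exact: FtC].
Qed.

(* The greedy sequence stays inside any facial reduction sequence G,
   step by step, by the relative interior choice. *)
Lemma greedy_below m (G : nat -> vset R n) (e : nat -> 'rV[R]_n) :
  (forall x, G 0%N x <-> K x) ->
  (forall i, (i < m)%N -> fr_dir (G i) Ft (e i) /\ fr_step (G i) (G i.+1) (e i)) ->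
  forall j, (j <= m)%N -> (j <= N)%N -> forall x, F j x -> G j x.
Proof.
move=> G0 Gstep; elim=> [|j IH] jm jN x; first by move/F0/G0.
have [_ [rid st]] := greedy_step jN.
have [[De [_ Oe]] stG] := Gstep j jm.
move=> /st [Fx dx]; apply/stG; split; first exact: IH (ltnW jm) (ltnW jN) _ Fx.
rewrite dotC; apply: (ri_direction_minimal rid) => // z Fz.
exact/De/(IH (ltnW jm) (ltnW jN)).
Qed.

(* No facial reduction sequence reaches Ft in fewer than N steps: if m < N,
   the greedy cone F m is inside G m = Ft, yet d m ⊥ Ft must be nonzero
   on F m. *)
Lemma greedy_minimal m : fr_reaches K Ft m -> (N <= m)%N.
Proof.
move=> [G [e [G0 [Gstep Gm]]]]; rewrite leqNgt; apply/negP => mN.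
have [[_ [nod od]] _] := greedy_step mN.
apply: nod => x Fx; apply: od; apply/Gm.
exact: greedy_below G0 Gstep m (leqnn m) (ltnW mN) x Fx.
Qed.
End GreedySequence.

Theorem mainTheorem3 (R : realType) (n : nat) (K Ft : vset R n)
  (hK : convex_cone K) (hF : face Ft K)
  (N : nat) (F : nat -> vset R n) (d : nat -> 'rV[R]_n) :
  (forall x, F 0%N x <-> K x) ->
  (forall i, (i < N)%N ->
     fr_dir (F i) Ft (d i) /\
     ri (setI_ (dual (F i)) (orth Ft)) (d i) /\
     fr_step (F i) (F i.+1) (d i)) ->
  (~ exists d', fr_dir (F N) Ft d') ->
  singularity_degree K Ft N.
Proof.
move=> F0 greedy_step stuck.
split; last exact: greedy_minimal F0 greedy_step.
exists F, d; split=> //; split=> [i iN|x].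
  by have [? [_ ?]] := greedy_step i iN.
exact: (greedy_reaches hK hF F0 greedy_step stuck x).
Qed.
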